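(* (a) The integers $n>1$ with exactly one distinct prime divisor satisfying $F_n=D_n$ are exactly the powers $2^k$, $k\ge1$. (b) If $n$ has exactly two distinct prime divisors and $F_n=D_n$, then $n=2^k(2^k+1)^j$ for some positive integers $k,j$ with $2^k+1$ prime.
   Context: For a composite integer $m$, let $d(m)$ denote the largest divisor of $m$ with $1<d(m)<m$. Define $f$ on integers $m>1$ by $f(m)=m-1$ if $m$ is prime and $f(m)=m-d(m)$ if $m$ is composite. Let $f^{(0)}(m)=m$, $f^{(i)}=f\circ f^{(i-1)}$. Define $F_m=\{m,f(m),f^{(2)}(m),\dots,1\}$, the set of iterates of $f$ from $m$ up to and including the first occurrence of $1$, and let $D_m$ be the set of positive divisors of $m$. *)

From mathcomp Require Import all_boot.
Set Implicit Arguments. Unset Strict Implicit. Unset Printing Implicit Defensive.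

(* d(m): the largest divisor of m with 1 < d(m) < m (meaningful for composite m). *)
Definition dlarge (m : nat) : nat := \max_(d < m | (1 < d) && (d %| m)) d.

Definition fstep (m : nat) : nat := if prime m then m.-1 else m - dlarge m.

(* F_m: the set of iterates m, f(m), f^(2)(m), ... up to and including the
   first occurrence of 1. *)
Definition inF (m x : nat) : Prop :=
  exists i, x = iter i fstep m /\ forall j, j < i -> iter j fstep m <> 1.

Definition F_eq_D (m : nat) : Prop :=
  forall x, inF m x <-> (0 < x /\ x %| m).

(* An odd n > 1 is sent by f to an even number, which cannot divide n; so
   F_n = D_n forces n to be even.  Halving peels off the factors 2, so for
   n = 2^k the orbit is 2^k, 2^(k-1), ..., 1, which is exactly D_n.  For
   n = 2^a q^b (q an odd prime) the orbit runs 2^a q^b, ..., q^b and then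
   reaches q^(b-1)(q-1), so q - 1 = 2^c with c <= a.  From then on every
   iterate is 2^i q^j with i <= c unless it still carries q^b, so 2^a
   belongs to F_n only if c = a. *)

From mathcomp Require Import all_boot.
From mathcomp Require Import zify.

Lemma dlarge_composite m : 1 < m -> ~~ prime m -> dlarge m = m %/ pdiv m.
Proof.
move=> m_gt1 m_comp.
have p_dvd := pdiv_dvd m.
have p_gt1 := prime_gt1 (pdiv_prime m_gt1).
have p_lt : pdiv m < m.
  rewrite ltn_neqAle dvdn_leq ?(ltnW m_gt1) // andbT.
  by apply: contraNneq m_comp => <-; apply: pdiv_prime.
have m_eq := divnK p_dvd.
apply/eqP; rewrite eqn_leq; apply/andP; split.
- apply/bigmax_leqP => d /andP[d_gt1 d_dvd].
  have d_lt : (d : nat) < m by [].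
  have cod_gt1 : 1 < m %/ d by have := divnK d_dvd; nia.
  have := pdiv_min_dvd cod_gt1 (dvdn_div d_dvd).
  rewrite leq_divRL; last by lia.
  have := divnK d_dvd; nia.
- have cop_lt : m %/ pdiv m < m by nia.
  apply: (leq_bigmax_cond (Ordinal cop_lt)) => /=.
  by rewrite dvdn_div // andbT; nia.
Qed.

Lemma fstep_composite m : 1 < m -> ~~ prime m -> fstep m = m - m %/ pdiv m.
Proof. by move=> m_gt1 m_comp; rewrite /fstep (negbTE m_comp) dlarge_composite. Qed.

Lemma fstep1 : fstep 1 = 1.
Proof. by rewrite /fstep /dlarge big_pred0 // => -[[|[|d]] ?]. Qed.

Lemma fstep_double m : 0 < m -> fstep (2 * m) = m.
Proof.
move=> m_gt0; have [m_gt1 | ] := ltnP 1 m; last by case: m m_gt0 => [|[|]].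
have comp : ~~ prime (2 * m).
  by apply/primePn; right; exists 2; rewrite ?dvdn_mulr //; lia.
rewrite fstep_composite //; last by lia.
have p2 : pdiv (2 * m) = 2.
  apply/eqP; rewrite eqn_leq pdiv_min_dvd ?dvdn_mulr //=.
  by apply: prime_gt1; apply: pdiv_prime; lia.
by rewrite p2 mulKn //; lia.
Qed.

Lemma fstep_double_pow i m : 0 < m -> fstep (2 ^ i.+1 * m) = 2 ^ i * m.
Proof.
by move=> m_gt0; rewrite expnS -mulnA fstep_double // muln_gt0 expn_gt0.
Qed.

Lemma fstep_prime_pow q j : prime q -> fstep (q ^ j.+1) = q ^ j * q.-1.
Proof.
move=> q_pr; have q_gt1 := prime_gt1 q_pr.
case: j => [|j]; first by rewrite /fstep expn1 q_pr mul1n.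
have comp : ~~ prime (q ^ j.+2).
  apply/primePn; right; exists q; rewrite ?dvdn_exp // q_gt1 /=.
  by rewrite -[X in X < _]expn1 ltn_exp2l.
rewrite fstep_composite //; last by rewrite -(expn0 q) ltn_exp2l.
rewrite pdiv_pfactor // expnS mulKn; last by lia.
have : 0 < q ^ j.+1 by rewrite expn_gt0; lia.
move: (q ^ j.+1) => t; nia.
Qed.

Lemma fstep_odd n : 1 < n -> odd n -> ~~ odd (fstep n) && (0 < fstep n).
Proof.
move=> n_gt1 n_odd; rewrite /fstep; case: ifPn => [_ | n_comp].
  by case: n n_gt1 n_odd => [|n] //= n_gt0 ->; lia.
rewrite dlarge_composite //.
have p_dvd := pdiv_dvd n.
have p_gt1 := prime_gt1 (pdiv_prime n_gt1).
have n_eq := divnK p_dvd.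
have co_odd : odd (n %/ pdiv n) by move: n_odd; rewrite -{1}n_eq oddM => /andP[].
have co_lt : n %/ pdiv n < n by nia.
by rewrite oddB ?n_odd ?co_odd //= ?subn_gt0 // ltnW.
Qed.

Lemma iter_fstep_one n i j : j <= i -> iter j fstep n = 1 -> iter i fstep n = 1.
Proof.
move=> /subnK <- one; rewrite iterD one.
by elim: (i - j) => //= k ->; apply: fstep1.
Qed.

Lemma inF_iter n i : iter i fstep n <> 1 -> inF n (iter i fstep n).
Proof.
move=> neq1; exists i; split => // j lt_ji /(iter_fstep_one n i j (ltnW lt_ji)).
exact: neq1.
Qed.

Lemma inF_invariant (P : nat -> Prop) n x :
  P n -> (forall y, P y -> P (fstep y)) -> inF n x -> P x.
Proof. by move=> Pn Pf [i [-> _]]; elim: i => //= i; apply: Pf. Qed.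

Lemma F_eq_D_even n : 1 < n -> F_eq_D n -> 2 %| n.
Proof.
move=> n_gt1 FD; rewrite dvdn2; apply/negP => n_odd.
have /andP[f_even f_gt0] := fstep_odd n n_gt1 n_odd.
have /FD[_ f_dvd] : inF n (fstep n).
  by apply: (inF_iter n 1) => /= f1; rewrite f1 in f_even.
by have := dvdn_odd f_dvd n_odd; rewrite (negbTE f_even).
Qed.

Lemma iter_fstep_halve a m i : 0 < m -> i <= a ->
  iter i fstep (2 ^ a * m) = 2 ^ (a - i) * m.
Proof.
move=> m_gt0; elim: i => [|i IH] lt_ia; first by rewrite subn0.
by rewrite iterS (IH (ltnW lt_ia)) -(subnSK lt_ia) fstep_double_pow.
Qed.

Lemma iter_fstep_pow2 k i : iter i fstep (2 ^ k) = 2 ^ (k - i).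
Proof.
have [le_ik | lt_ki] := leqP i k.
  by rewrite -[2 ^ k]muln1 iter_fstep_halve // muln1.
have /eqP -> : k - i == 0 by rewrite subn_eq0 ltnW.
apply: (iter_fstep_one _ _ k (ltnW lt_ki)).
by rewrite -[2 ^ k]muln1 iter_fstep_halve // subnn.
Qed.

Lemma F_eq_D_pow2 k : F_eq_D (2 ^ k).
Proof.
move=> x; split.
- by case=> i [-> _]; rewrite iter_fstep_pow2 expn_gt0 dvdn_exp2l ?leq_subr.
- case=> _ /(dvdn_pfactor _ _ (isT : prime 2)) [m le_mk ->].
  exists (k - m); split; first by rewrite iter_fstep_pow2 subKn.
  by move=> j lt_j /eqP; rewrite iter_fstep_pow2 -(expn0 2) eqn_exp2l //; lia.
Qed.

Section TwoPrimeFactors.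

Variables (q c b : nat).
Hypotheses (q_pr : prime q) (q_pred : q.-1 = 2 ^ c).

Let q_gt0 : 0 < q. Proof. exact: prime_gt0. Qed.

Lemma fstep_prime_pow_pred j : fstep (q ^ j.+1) = 2 ^ c * q ^ j.
Proof. by rewrite fstep_prime_pow // q_pred mulnC. Qed.

Definition two_prime_shape x :=
  (exists i, x = 2 ^ i * q ^ b.+1) \/
  (exists i j, [/\ i <= c, j <= b & x = 2 ^ i * q ^ j]).

Lemma fstep_two_prime_shape x :
  two_prime_shape x -> two_prime_shape (fstep x).
Proof.
case=> [[[|i] ->] | [[|i] [j [le_ic le_jb ->]]]].
- by right; exists c, b; rewrite mul1n fstep_prime_pow_pred.
- by left; exists i; rewrite fstep_double_pow // expn_gt0 q_gt0.
- case: j le_jb => [|j] le_jb; first by right; exists 0, 0; rewrite mul1n fstep1.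
  by right; exists c, j; rewrite mul1n fstep_prime_pow_pred (ltnW le_jb).
- by right; exists i, j; rewrite fstep_double_pow ?expn_gt0 ?q_gt0 // (ltnW le_ic).
Qed.

Lemma inF_two_prime_shape a x : inF (2 ^ a * q ^ b.+1) x -> two_prime_shape x.
Proof.
apply: inF_invariant; last exact: fstep_two_prime_shape.
by left; exists a.
Qed.

End TwoPrimeFactors.

Lemma odd_prime_ndvd_pow2 q a : prime q -> 2 < q -> ~~ (q %| 2 ^ a).
Proof.
move=> q_pr q_gt2; rewrite Euclid_dvdX //; apply/nandP; left.
by apply: contraTN q_gt2 => q_dvd; rewrite -leqNgt dvdn_leq.
Qed.

Lemma F_eq_D_pred_pow2 a b q : prime q -> 2 < q -> F_eq_D (2 ^ a * q ^ b.+1) ->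
  exists2 c, c <= a & q.-1 = 2 ^ c.
Proof.
move=> q_pr q_gt2 FD.
have qb_gt0 : 0 < q ^ b by rewrite expn_gt0 prime_gt0.
have reach : iter a.+1 fstep (2 ^ a * q ^ b.+1) = q ^ b * q.-1.
  by rewrite iterS iter_fstep_halve ?subnn ?mul1n ?fstep_prime_pow // expn_gt0 prime_gt0.
have /FD[_] : inF (2 ^ a * q ^ b.+1) (q ^ b * q.-1).
  rewrite -reach; apply: inF_iter; rewrite reach; nia.
rewrite expnSr mulnCA dvdn_pmul2l // => pred_dvd.
apply/(dvdn_pfactor _ _ (isT : prime 2)).
by rewrite -(Gauss_dvdr _ (coprimenS q.-1)) prednK ?prime_gt0 // mulnC.
Qed.

Lemma F_eq_D_two_primes a b q : prime q -> 2 < q ->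
  F_eq_D (2 ^ a * q ^ b.+1) -> q = (2 ^ a).+1.
Proof.
move=> q_pr q_gt2 FD.
have [c le_ca q_pred] := F_eq_D_pred_pow2 a b q q_pr q_gt2 FD.
suff le_ac : a <= c.
  by rewrite -(prednK (prime_gt0 q_pr)) q_pred; have -> : c = a by lia.
have q_ndvd := odd_prime_ndvd_pow2 q a q_pr q_gt2.
have /FD /(inF_two_prime_shape q c b q_pr q_pred) : 0 < 2 ^ a /\ 2 ^ a %| 2 ^ a * q ^ b.+1.
  by rewrite expn_gt0 dvdn_mulr.
case=> [[i E] | [i [[|j] [le_ic _ E]]]].
- by case/negP: q_ndvd; rewrite E dvdn_mull // dvdn_exp.
- by move: E; rewrite muln1 => /eqP; rewrite eqn_exp2l // => /eqP ->.
- by case/negP: q_ndvd; rewrite E dvdn_mull // dvdn_exp.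
Qed.

Lemma prod_primes_logn n : 0 < n -> n = \prod_(p <- primes n) p ^ logn p n.
Proof. by move=> n_gt0; rewrite {1}(prod_prime_decomp n_gt0) prime_decompE big_map. Qed.

Lemma primes_even n : 0 < n -> 2 %| n -> primes n = 2 :: behead (primes n).
Proof.
move=> n_gt0 two_dvd; have := sorted_primes n.
have : 2 \in primes n by rewrite mem_primes n_gt0 two_dvd.
have : all prime (primes n) by apply/allP => p; rewrite mem_primes => /andP[].
case: (primes n) => [|p s] //= /andP[p_pr _]; rewrite inE => /orP[/eqP -> // | two_in].
move=> /(order_path_min ltn_trans)/allP/(_ 2 two_in) lt_p2.
by move: (prime_gt1 p_pr); rewrite ltnNge -ltnS lt_p2.
Qed.

Theorem mainTheorem10 :
  (forall n : nat, 1 < n -> size (primes n) = 1 ->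
     (F_eq_D n <-> exists k, 1 <= k /\ n = 2 ^ k))
  /\
  (forall n : nat, 1 < n -> size (primes n) = 2 -> F_eq_D n ->
     exists k j, 1 <= k /\ 1 <= j /\ prime (2 ^ k).+1 /\
                 n = 2 ^ k * (2 ^ k).+1 ^ j).
Proof.
split=> n n_gt1; have n_gt0 : 0 < n by apply: ltnW.
- move=> size1; split; last by case=> k [_ ->]; apply: F_eq_D_pow2.
  move=> FD; have primes_n := primes_even n n_gt0 (F_eq_D_even n n_gt1 FD).
  move: size1; rewrite primes_n; case: (behead _) primes_n => // primes_n _.
  exists (logn 2 n); split; first by rewrite logn_gt0 primes_n mem_head.
  by rewrite {1}(prod_primes_logn n n_gt0) primes_n big_seq1.
move=> size2 FD; have primes_n := primes_even n n_gt0 (F_eq_D_even n n_gt1 FD).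
move: size2 (sorted_primes n); rewrite primes_n.
case: (behead _) primes_n => [|q [|]] // primes_n _ /= /andP[lt_2q _].
have q_in : q \in primes n by rewrite primes_n !inE eqxx orbT.
have q_pr : prime q by move: q_in; rewrite mem_primes => /andP[].
have n_eq : n = 2 ^ logn 2 n * q ^ (logn q n).-1.+1.
  by rewrite prednK ?logn_gt0 // {1}(prod_primes_logn n n_gt0) primes_n big_cons big_seq1.
have q_eq : q = (2 ^ logn 2 n).+1.
  by apply: (F_eq_D_two_primes _ (logn q n).-1 _ q_pr lt_2q); rewrite -n_eq.
exists (logn 2 n), (logn q n); rewrite -q_eq logn_gt0 primes_n mem_head logn_gt0 q_in.
by do !split=> //; rewrite {1}n_eq prednK // logn_gt0.
Qed.
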